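(* Let $n\ge 2$ and let $P$ be an $n\times n$ permutation matrix. Then $P$ is the leaf matrix of exactly one CNM of size $n$ if and only if (a) for every $k$ with $2\le k\le n-1$ the $k$-th L-subset of $P$ contains exactly one entry equal to $1$, and (b) $P$ has no entry equal to $1$ on its main diagonal.
   Context: A complete non-ambiguous matrix (CNM) of size $n$ is an $n\times n$ matrix $M=(m_{i,j})$ with entries in $\{0,1\}$ whose support $T=\{(i,j): m_{i,j}=1\}$ (whose elements are called vertices) satisfies: (1) $(1,1)\in T$; (2) for every $p=(i,j)\in T$ with $p\neq(1,1)$, exactly one of the following holds: there is $(i',j)\in T$ with $i'<i$, or there is $(i,j')\in T$ with $j'<j$; (3) every row and every column of $M$ contains at least one vertex; (4) define the parent of $p=(i,j)\neq(1,1)$ to be $(i',j)$ with $i'<i$ maximal if such a vertex exists, and otherwise $(i,j')$ with $j'<j$ maximal; then every vertex is the parent of either zero or exactly two vertices. A vertex with no children is a leaf. The leaf matrix $p(M)$ is obtained from $M$ by replacing all non-leaf vertices by $0$ (it is a permutation matrix). For an $n\times n$ matrix and $k>1$, the $k$-th L-subset is the set of positions $\{(i,j): (i=k \text{ and } j\le k) \text{ or } (j=k \text{ and } i\le k)\}$. *)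

From mathcomp Require Import all_boot all_order all_algebra all_fingroup.
Set Implicit Arguments. Unset Strict Implicit. Unset Printing Implicit Defensive.
Import GRing.Theory.
Local Open Scope ring_scope.

(* Matrices are n x n over int, indexed by 'I_n (0-based: paper's row i is
   index i-1). Vertices = positions carrying the entry 1. *)
Section CNM.
Variable n : nat.
Implicit Types (M : 'M[int]_n) (p q : 'I_n * 'I_n).

Definition zero_one M : Prop := forall i j, M i j = 0 \/ M i j = 1.

Definition vertex M p : bool := M p.1 p.2 == 1.

Definition is_root p : bool := (val p.1 == 0%N) && (val p.2 == 0%N).

Definition has_above M p : bool :=
  [exists i' : 'I_n, (val i' < val p.1)%N && vertex M (i', p.2)].
Definition has_left M p : bool :=
  [exists j' : 'I_n, (val j' < val p.2)%N && vertex M (p.1, j')].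

Definition is_parent M q p : bool :=
  vertex M p && ~~ is_root p && vertex M q &&
  (if has_above M p then
     (q.2 == p.2) && (val q.1 < val p.1)%N &&
     [forall i' : 'I_n, ((val q.1 < val i')%N && (val i' < val p.1)%N)
                          ==> ~~ vertex M (i', p.2)]
   else
     (q.1 == p.1) && (val q.2 < val p.2)%N &&
     [forall j' : 'I_n, ((val q.2 < val j')%N && (val j' < val p.2)%N)
                          ==> ~~ vertex M (p.1, j')]).

Definition children M q : {set 'I_n * 'I_n} := [set p | is_parent M q p].

Definition is_CNM M : Prop :=
  [/\ zero_one M,
      (forall p, is_root p -> vertex M p),
      (forall p, vertex M p -> ~~ is_root p ->
                   (has_above M p (+) has_left M p)),
      (forall i : 'I_n, exists j : 'I_n, vertex M (i, j))
                /\ (forall j : 'I_n, exists i : 'I_n, vertex M (i, j))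
    & (forall q, vertex M q ->
                   #|children M q| = 0%N \/ #|children M q| = 2%N)].

Definition is_leaf M p : bool := vertex M p && (#|children M p| == 0%N).

Definition leaf_mx M : 'M[int]_n :=
  \matrix_(i, j) (if is_leaf M (i, j) then 1 else 0).

(* k-th L-subset, k given 1-based as in the paper *)
Definition Lsubset (k : nat) : {set 'I_n * 'I_n} :=
  [set p | (((val p.1).+1 == k) && ((val p.2).+1 <= k)%N)
        || (((val p.2).+1 == k) && ((val p.1).+1 <= k)%N)].

End CNM.

From mathcomp Require Import all_boot all_order all_algebra all_fingroup zify.
Set Implicit Arguments. Unset Strict Implicit. Unset Printing Implicit Defensive.

(* Let sg be the leaf permutation (the leaf of row i is in column sg i) and
   tg = sg^-1. By condition (2) every vertex of a CNM is either the leftmost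
   vertex of its row or the topmost vertex of its column, so the CNM is
   determined by a i, the column of the leftmost vertex of row i, and b j, the
   row of the topmost vertex of column j; the admissible pairs (a, b) are
   described by a few order conditions.
   Call o a sole crossing of sg at k when o is the only row i < k with
   sg i >= k. If the pair (a, b) is unique, then sg has no fixed point and
   every 0 < k < n has a sole crossing for sg and for tg: at the least k where
   this fails, a local modification of (a, b) yields a second admissible pair.
   Conversely, under these conditions a i must be the sole crossing of tg at i
   and b j that of sg at j, which gives both existence and uniqueness. Finally,
   for a fixed-point free sg, sole crossings at every k amount to the L-subset
   condition: the k-th L-subset meets the graph of sg exactly once. *)

Definition bij_pair (n : nat) (sg tg : nat -> nat) :=
  [/\ (forall i, i < n -> sg i < n), (forall i, i < n -> tg i < n),
      (forall i, i < n -> tg (sg i) = i) & (forall i, i < n -> sg (tg i) = i)].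

Section BijPair.
Variables (n : nat) (sg tg : nat -> nat).
Hypothesis P : bij_pair n sg tg.

Lemma bij_pairC : bij_pair n tg sg.
Proof. by case: P. Qed.

Lemma sg_lt i : i < n -> sg i < n. Proof. by case: P => H _ _ _; apply: H. Qed.
Lemma tg_lt i : i < n -> tg i < n. Proof. by case: P => _ H _ _; apply: H. Qed.
Lemma sgK i : i < n -> tg (sg i) = i. Proof. by case: P => _ _ H _; apply: H. Qed.
Lemma tgK i : i < n -> sg (tg i) = i. Proof. by case: P => _ _ _ H; apply: H. Qed.

Lemma bij_stable k : k <= n -> (forall i, i < k -> sg i < k) ->
  forall j, j < k -> tg j < k.
Proof.
move=> kn sg_k j jk.
pose f (i : 'I_k) : 'I_k := Ordinal (sg_k i (ltn_ord i)).
have f_inj : injective f.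
  move=> x y /(congr1 val) /= E; apply: val_inj => /=.
  have xn : x < n by have := ltn_ord x; lia.
  have yn : y < n by have := ltn_ord y; lia.
  by rewrite -(sgK xn) E (sgK yn).
have := injF_onto f_inj (Ordinal jk); case/codomP => x /(congr1 val) /= ->.
by rewrite sgK //; have := ltn_ord x; lia.
Qed.

End BijPair.

(* [code_rows] says: the leftmost vertex of row 0 is the root; for i > 0 the
   leftmost vertex of row i has a vertex above it; the leaf (i, sg i) lies
   weakly right of it and is itself leftmost in its row or topmost in its
   column; and the leaf of column a i lies weakly below row i. *)
Definition code_rows (n : nat) (sg tg a b : nat -> nat) :=
  [/\ a 0 = 0, (forall i, 0 < i -> i < n -> b (a i) < i) &
      (forall i, i < n ->
         [/\ a i <= sg i, a i = sg i \/ b (sg i) = i & i <= tg (a i)])].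

Definition cnm_code n sg tg a b := code_rows n sg tg a b /\ code_rows n tg sg b a.

Lemma cnm_codeC n sg tg a b : cnm_code n sg tg a b -> cnm_code n tg sg b a.
Proof. by case. Qed.

Section Code.
Variables (n : nat) (sg tg a b : nat -> nat).
Hypotheses (P : bij_pair n sg tg) (V : cnm_code n sg tg a b).

Lemma code_a0 : a 0 = 0. Proof. by case: V => [[]]. Qed.
Lemma code_b0 : b 0 = 0. Proof. by case: V => _ []. Qed.
Lemma code_a_above i : 0 < i -> i < n -> b (a i) < i.
Proof. by case: V => [[_ H _]] _; apply: H. Qed.
Lemma code_b_left j : 0 < j -> j < n -> a (b j) < j.
Proof. by case: V => _ [_ H _]; apply: H. Qed.
Lemma code_row i : i < n -> [/\ a i <= sg i, a i = sg i \/ b (sg i) = i & i <= tg (a i)].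
Proof. by case: V => [[_ _ H]] _; apply: H. Qed.
Lemma code_col j : j < n -> [/\ b j <= tg j, b j = tg j \/ a (tg j) = j & j <= sg (b j)].
Proof. by case: V => _ [_ _ H]; apply: H. Qed.

Lemma code_a_lt i : i < n -> a i < n.
Proof. by move=> Hi; case: (code_row Hi) => H _ _; have := sg_lt P Hi; lia. Qed.
Lemma code_b_lt j : j < n -> b j < n.
Proof. by move=> Hj; case: (code_col Hj) => H _ _; have := tg_lt P Hj; lia. Qed.

Lemma crossing_exists k : 0 < k -> k < n -> exists2 i, i < k & k <= sg i.
Proof.
move=> k0 kn; case: (boolP [exists i : 'I_k, k <= sg i]).
  by case/existsP => i Hi; exists i.
move=> /existsPn no_cross.
have sg_k : forall i, i < k -> sg i < k.
  by move=> i ik; have := no_cross (Ordinal ik); rewrite /= -ltnNge.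
have tg_k := bij_stable P (ltnW kn) sg_k.
case: (code_row kn) => _ _ Ht.
case: (ltnP (a k) k) => Hak; first by have := tg_k _ Hak; lia.
have Hb := code_a_above k0 kn.
case: (code_col (code_a_lt kn)) => _ _ Hs.
by have := sg_k _ Hb; lia.
Qed.

Lemma code_sg0_neq : 1 < n -> sg 0 <> 0.
Proof.
move=> n1 sg0; case: (crossing_exists (isT : 0 < 1) n1) => i i1.
have E : i = 0 by lia.
by rewrite E sg0.
Qed.

End Code.

Definition sole_crossing (sg : nat -> nat) k o :=
  [/\ o < k, k <= sg o & forall i, i < k -> k <= sg i -> i = o].

Section SoleCrossing.
Variables (sg : nat -> nat) (k o : nat).
Hypothesis O : sole_crossing sg k o.

Lemma crossing_lt : o < k. Proof. by case: O. Qed.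
Lemma crossing_reach : k <= sg o. Proof. by case: O. Qed.
Lemma crossing_uniq i : i < k -> k <= sg i -> i = o. Proof. by case: O => _ _; apply. Qed.

End SoleCrossing.

Lemma crossing_head_left n sg tg a b m o : bij_pair n sg tg -> cnm_code n sg tg a b ->
  m < n -> sole_crossing sg m o -> a o < m.
Proof.
move=> P V mn O; have om := crossing_lt O; have on : o < n by lia.
case: (posnP o) => [o0|o0]; first by rewrite o0 (code_a0 V); lia.
case: (ltnP (a o) m) => // H.
have Hb := code_a_above V o0 on.
case: (code_col V (code_a_lt P V on)) => _ _ Hs.
by have := crossing_uniq O (i := b (a o)); lia.
Qed.

Lemma crossing_head_above n sg tg a b m o : bij_pair n sg tg -> cnm_code n sg tg a b ->
  m < n -> sole_crossing tg m o -> b o < m.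
Proof. by move=> P V mn O; exact: (crossing_head_left (bij_pairC P) (cnm_codeC V) mn O). Qed.

Definition codes_differ n (a b a' b' : nat -> nat) :=
  exists2 i, i < n & a' i <> a i \/ b' i <> b i.

Definition code_ambiguous n sg tg a b :=
  exists a' b', cnm_code n sg tg a' b' /\ codes_differ n a b a' b'.

Lemma code_ambiguousC n sg tg a b :
  code_ambiguous n tg sg b a -> code_ambiguous n sg tg a b.
Proof.
case=> a' [b' [V [i iN D]]]; exists b', a'; split; first exact: cnm_codeC.
by exists i => //; case: D; [right | left].
Qed.

Definition update (f : nat -> nat) x v := fun y => if y == x then v else f y.

Section Ambiguity.
Variables (n : nat) (sg tg a b : nat -> nat) (m o o' : nat).
Hypotheses (P : bij_pair n sg tg) (V : cnm_code n sg tg a b) (m0 : 0 < m) (mn : m < n)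
  (O : sole_crossing sg m o) (O' : sole_crossing tg m o').

Let om : o < m := crossing_lt O.
Let o'm : o' < m := crossing_lt O'.
Let ao : a o < m := crossing_head_left P V mn O.
Let bo' : b o' < m := crossing_head_above P V mn O'.
Let sgo : m <= sg o := crossing_reach O.
Let tgo' : m <= tg o' := crossing_reach O'.

Lemma fixed_leaf_col_heads : sg m = m -> forall j, j < n -> j != m -> b j != m.
Proof.
move=> sgm j jn jm; apply/eqP => bj.
case: (code_col V jn) => H1 _ H2; rewrite bj sgm in H2; rewrite bj in H1.
have jm' : j < m by lia.
by move: bo'; rewrite -(crossing_uniq O' jm' H1) bj ltnn.
Qed.

Lemma fixed_leaf_row_heads : sg m = m -> forall i, i < n -> i != m -> a i != m.
Proof.
move=> sgm i iN im; apply/eqP => ai.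
have tgm : tg m = m by rewrite -{1}sgm (sgK P).
case: (code_row V iN) => H1 _ H2; rewrite ai tgm in H2; rewrite ai in H1.
have im' : i < m by lia.
by move: ao; rewrite -(crossing_uniq O im' H1) ai ltnn.
Qed.

(* Trade the vertex (o, m) for (m, o'): the diagonal leaf (m, m) then hangs
   from its row instead of its column. *)
Lemma ambiguous_fixed_leaf : sg m = m -> a m = m -> code_ambiguous n sg tg a b.
Proof.
move=> sgm am.
have tgm : tg m = m by rewrite -{1}sgm (sgK P).
exists (update a m o'), (update b m m); split; last first.
  by exists m => //; left; rewrite /update eqxx; lia.
split; split.
- by rewrite /update ifN_eq; [exact: code_a0 V | apply/eqP; lia].
- move=> i i0 iN; rewrite /update; case: (eqVneq i m) => [->|im].
    by rewrite ?eqxx ifN_eq //; apply/eqP; lia.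
  by rewrite (negbTE (fixed_leaf_row_heads sgm iN im)); exact: (code_a_above V i0 iN).
- move=> i iN; rewrite /update; case: (eqVneq i m) => [->|im].
    by rewrite ?eqxx sgm ?eqxx; split; [lia | right | lia].
  case: (code_row V iN) => H1 H2 H3; split => //.
  case: H2 => [->|H2]; first by left.
  by right; rewrite ifN_eq //; apply/eqP => E; move: im; rewrite -(sgK P iN) E tgm eqxx.
- by rewrite /update ifN_eq; [exact: code_b0 V | apply/eqP; lia].
- move=> j j0 jN; rewrite /update; case: (eqVneq j m) => [->|jm]; first by rewrite ?eqxx.
  by rewrite (negbTE (fixed_leaf_col_heads sgm jN jm)); exact: (code_b_left V j0 jN).
- move=> j jN; rewrite /update; case: (eqVneq j m) => [->|jm].
    by rewrite ?eqxx tgm sgm; split => //; left.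
  case: (code_col V jN) => H1 H2 H3; split => //.
  case: H2 => [->|H2]; first by left.
  by right; rewrite ifN_eq //; apply/eqP => E; move: jm; rewrite -(tgK P jN) E sgm eqxx.
Qed.

Section LowColumnHead.
Hypothesis rm : m < b m.

Lemma low_column_head_col j : j < n -> j != m -> b j = b m -> m < j.
Proof.
move=> jn jm bj; case: (ltnP m j) => // jm'.
have jm2 : j < m by lia.
case: (code_col V jn) => H1 _ _; rewrite bj in H1.
have Ej := crossing_uniq O' jm2 (leq_trans (ltnW rm) H1).
by move: bo'; rewrite -Ej bj; lia.
Qed.

Lemma low_column_head_row i : i < n -> a i = m -> m < i.
Proof.
move=> iN ai; case: (ltnP m i) => // im.
case: (eqVneq i m) => [Eim|im2].
  by have := code_a_above V m0 mn; rewrite -{1}Eim ai; lia.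
have im3 : i < m by lia.
case: (code_row V iN) => H1 _ _; rewrite ai in H1.
by move: ao; rewrite -(crossing_uniq O im3 H1) ai ltnn.
Qed.

Lemma ambiguous_low_column_head : code_ambiguous n sg tg a b.
Proof.
have rn := code_b_lt P V mn; have mr := rm; set r := b m in mr rn *.
have ar : a r < m by exact: (code_b_left V m0 mn).
have sgr : m <= sg r by case: (code_col V mn).
have tgm : r <= tg m by case: (code_col V mn).
exists (update a r m), (update b m o); split; last first.
  by exists m => //; right; rewrite /update eqxx -/r; lia.
split; split.
- by rewrite /update ifN_eq; [exact: code_a0 V | apply/eqP; lia].
- move=> i i0 iN; rewrite /update; case: (eqVneq i r) => [->|ir]; first by rewrite ?eqxx; lia.
  case: (eqVneq (a i) m) => [aim|aim].
    by rewrite ?aim ?eqxx; have := low_column_head_row iN aim; lia.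
  exact: (code_a_above V i0 iN).
- move=> i iN; rewrite /update; case: (eqVneq i r) => [->|ir].
    rewrite ?eqxx; split => //.
    case: (eqVneq (sg r) m) => [->|sm]; first by left.
    by right; case: (code_row V rn) => _ [H|H] _ //; lia.
  case: (code_row V iN) => H1 H2 H3; split => //.
  case: H2 => [->|H2]; first by left.
  by right; rewrite ifN_eq //; apply/eqP => E; move: ir; rewrite -H2 E eqxx.
- by rewrite /update ifN_eq; [exact: code_b0 V | apply/eqP; lia].
- move=> j j0 jN; rewrite /update; case: (eqVneq j m) => [->|jm].
    by rewrite ?eqxx ifN_eq; [lia | apply/eqP; lia].
  case: (eqVneq (b j) r) => [bjr|bjr]; first by rewrite ?bjr ?eqxx; apply: low_column_head_col.
  exact: (code_b_left V j0 jN).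
- move=> j jN; rewrite /update; case: (eqVneq j m) => [->|jm].
    rewrite ?eqxx; split; [lia | | lia].
    case: (eqVneq (tg m) r) => [->|tmr]; first by right.
    by right; case: (code_col V mn) => _ [H|H] _ //; move: tmr; rewrite -H eqxx.
  case: (code_col V jN) => H1 H2 H3; split => //.
  case: H2 => [->|H2]; first by left.
  right; rewrite ifN_eq //; apply/eqP => E.
  have sgrj : sg r = j by rewrite -E (tgK P jN).
  by rewrite E in H2; lia.
Qed.

End LowColumnHead.

Lemma ambiguous_diag_head : m < sg m -> a m = m -> b m = o -> code_ambiguous n sg tg a b.
Proof.
move=> sgm am bm.
exists (update a m o'), b; split; last first.
  by exists m => //; left; rewrite /update eqxx; lia.
split; split.
- by rewrite /update ifN_eq; [exact: code_a0 V | apply/eqP; lia].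
- move=> i i0 iN; rewrite /update; case: (eqVneq i m) => [->|im]; first by rewrite ?eqxx.
  exact: (code_a_above V i0 iN).
- move=> i iN; rewrite /update; case: (eqVneq i m) => [->|im]; last exact: (code_row V iN).
  rewrite ?eqxx; split; [lia | right | lia].
  by case: (code_row V mn) => _ [H|H] _ //; lia.
- exact: code_b0 V.
- move=> j j0 jN; rewrite /update; case: (eqVneq (b j) m) => [bjm|bjm].
    by have := code_b_left V j0 jN; rewrite bjm am; lia.
  exact: (code_b_left V j0 jN).
- move=> j jN; case: (code_col V jN) => H1 H2 H3; split => //.
  case: H2 => [->|H2]; first by left.
  right; rewrite /update ifN_eq //; apply/eqP => E.
  by move: H2; rewrite E am => Ej; have := tgK P jN; rewrite E; lia.
Qed.

Lemma ambiguous_crossing_heads : m < sg m -> m <= tg m -> a m = o' -> b m = o ->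
  code_ambiguous n sg tg a b.
Proof.
move=> sgm tgm am bm.
exists (update a m m), b; split; last first.
  by exists m => //; left; rewrite /update eqxx; lia.
split; split.
- by rewrite /update ifN_eq; [exact: code_a0 V | apply/eqP; lia].
- move=> i i0 iN; rewrite /update; case: (eqVneq i m) => [->|im]; first by rewrite ?eqxx bm.
  exact: (code_a_above V i0 iN).
- move=> i iN; rewrite /update; case: (eqVneq i m) => [->|im]; last exact: (code_row V iN).
  rewrite ?eqxx; split; [lia | right | lia].
  by case: (code_row V mn) => _ [H|H] _ //; lia.
- exact: code_b0 V.
- move=> j j0 jN; rewrite /update; case: (eqVneq (b j) m) => [bjm|bjm].
    case: (ltnP m j) => // jm; case: (eqVneq j m) => [Ej|jm2].
      by move: bjm; rewrite Ej bm; lia.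
    have jm3 : j < m by lia.
    case: (code_col V jN) => H1 _ _; rewrite bjm in H1.
    by move: bo'; rewrite -(crossing_uniq O' jm3 H1) bjm ltnn.
  exact: (code_b_left V j0 jN).
- move=> j jN; case: (code_col V jN) => H1 H2 H3; split => //.
  case: H2 => [->|H2]; first by left.
  right; rewrite /update ifN_eq //; apply/eqP => E.
  by move: H2; rewrite E am => Ej; have := tgK P jN; rewrite E; lia.
Qed.

End Ambiguity.

Lemma code_ambiguous_of_defect n sg tg a b m o o' :
  bij_pair n sg tg -> cnm_code n sg tg a b -> 0 < m -> m < n ->
  sole_crossing sg m o -> sole_crossing tg m o' ->
  sg m = m \/ m < sg m /\ m < tg m -> code_ambiguous n sg tg a b.
Proof.
move=> P V m0 mn O O' [sgm|[sgm tgm]].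
  case: (eqVneq (a m) m) => [am|am]; first exact: (ambiguous_fixed_leaf P V m0 mn O O' sgm am).
  case: (code_row V mn) => _ H2 _.
  have bm : b m = m by case: H2 => H; [move: am; rewrite H sgm eqxx | rewrite -{1}sgm].
  have tgm : tg m = m by rewrite -{1}sgm (sgK P).
  apply: code_ambiguousC.
  exact: (ambiguous_fixed_leaf (bij_pairC P) (cnm_codeC V) m0 mn O' O tgm bm).
case: (ltnP m (b m)) => bm; first exact: (ambiguous_low_column_head P V m0 mn O O' bm).
case: (ltnP m (a m)) => am.
  apply: code_ambiguousC.
  exact: (ambiguous_low_column_head (bij_pairC P) (cnm_codeC V) m0 mn O' O am).
case: (eqVneq (a m) m) => [aeq|ane].
  have bm2 : b m < m by have := code_a_above V m0 mn; rewrite aeq.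
  have bo : b m = o by apply: (crossing_uniq O bm2); case: (code_col V mn).
  exact: (ambiguous_diag_head P V m0 mn O O' sgm aeq bo).
have am2 : a m < m by lia.
have ao : a m = o' by apply: (crossing_uniq O' am2); case: (code_row V mn).
case: (eqVneq (b m) m) => [beq|bne].
  apply: code_ambiguousC.
  exact: (ambiguous_diag_head (bij_pairC P) (cnm_codeC V) m0 mn O' O tgm beq ao).
have bm2 : b m < m by lia.
have bo : b m = o by apply: (crossing_uniq O bm2); case: (code_col V mn).
exact: (ambiguous_crossing_heads P V m0 mn O O' sgm (ltnW tgm) ao bo).
Qed.

Definition sole_crossings n (sg : nat -> nat) :=
  forall k, 0 < k -> k < n -> exists o, sole_crossing sg k o.

Definition fixpoint_free n (sg : nat -> nat) := forall i, i < n -> sg i <> i.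

Lemma fixpoint_freeC n sg tg : bij_pair n sg tg -> fixpoint_free n sg -> fixpoint_free n tg.
Proof. by move=> P N j jn E; apply: (N j jn); rewrite -{1}E (tgK P jn). Qed.

Section UniqueCode.
Variables (n : nat) (sg tg a b : nat -> nat).
Hypotheses (P : bij_pair n sg tg) (V : cnm_code n sg tg a b)
  (U : ~ code_ambiguous n sg tg a b).

Lemma unique_code_no_fixed k o o' : 0 < k -> k < n ->
  sole_crossing sg k o -> sole_crossing tg k o' -> sg k <> k.
Proof.
move=> k0 kn O O' E; apply: U.
exact: (code_ambiguous_of_defect P V k0 kn O O' (or_introl E)).
Qed.

Lemma sole_crossing_succ k o o' : 0 < k -> k.+1 < n ->
  sole_crossing sg k o -> sole_crossing tg k o' -> exists o2, sole_crossing sg k.+1 o2.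
Proof.
move=> k0 kn O O'; have kn' : k < n by lia.
have sgk := unique_code_no_fixed k0 kn' O O'.
case: (crossing_exists P V (isT : 0 < k.+1) kn) => i ik Hi.
have om := crossing_lt O.
have not_both : ~ (k < sg o /\ k < sg k).
  move=> [h1 h2]; have tgk : k < tg k.
    case: (ltngtP k (tg k)) => // H.
      have E := crossing_uniq O H (eq_leq (esym (tgK P kn'))).
      by move: h1; rewrite -E (tgK P kn'); lia.
    by move: sgk; rewrite {1}H (tgK P kn').
  by apply: U; exact: (code_ambiguous_of_defect P V k0 kn' O O' (or_intror (conj h2 tgk))).
have crossers j : j < k.+1 -> k.+1 <= sg j -> j = o \/ j = k.
  case: (ltnP j k) => H jk Hj; last by right; lia.
  by left; apply: (crossing_uniq O H); lia.
exists i; split => // j jk Hj.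
by case: (crossers _ jk Hj) => Ej; case: (crossers _ ik Hi) => Ei; subst => //;
  exfalso; apply: not_both; lia.
Qed.

End UniqueCode.

Lemma sole_crossings_of_unique_code n sg tg a b : bij_pair n sg tg -> 1 < n ->
  cnm_code n sg tg a b -> ~ code_ambiguous n sg tg a b ->
  sole_crossings n sg /\ sole_crossings n tg.
Proof.
move=> P n1 V U.
have U' : ~ code_ambiguous n tg sg b a by move=> A; apply: U; exact: code_ambiguousC.
suff both k : 0 < k -> k < n ->
    (exists o, sole_crossing sg k o) /\ (exists o, sole_crossing tg k o).
  by split=> k k0 kn; case: (both k k0 kn).
have sg0 := code_sg0_neq P V n1; have tg0 := code_sg0_neq (bij_pairC P) (cnm_codeC V) n1.
elim: k => // k IH _ kn; case: (posnP k) => [->|k0].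
  by split; exists 0; split => [||i i1 _]; lia.
case: (IH k0 (ltnW kn)) => [[o O] [o' O']]; split.
  exact: (sole_crossing_succ P V U k0 kn O O').
exact: (sole_crossing_succ (bij_pairC P) (cnm_codeC V) U' k0 kn O' O).
Qed.

Lemma fixpoint_free_of_unique_code n sg tg a b : bij_pair n sg tg -> 1 < n ->
  cnm_code n sg tg a b -> ~ code_ambiguous n sg tg a b -> fixpoint_free n sg.
Proof.
move=> P n1 V U i iN; case: (posnP i) => [->|i0]; first exact: (code_sg0_neq P V n1).
have [Cs Ct] := sole_crossings_of_unique_code P n1 V U.
case: (Cs i i0 iN) => o O; case: (Ct i i0 iN) => o' O'.
exact: (unique_code_no_fixed P V U i0 iN O O').
Qed.

Lemma code_a_neq n sg tg a b : bij_pair n sg tg -> cnm_code n sg tg a b ->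
  sole_crossings n sg -> fixpoint_free n sg -> forall k, 0 < k -> k < n -> a k <> k.
Proof.
move=> P V Cs N k k0 kn ak.
case: (code_row V kn); rewrite ak => H1 _ H3.
have sgk : k < sg k by have := N k kn; lia.
have k1n : k.+1 < n by have := sg_lt P kn; lia.
case: (Cs k k0 kn) => o O; case: (Cs k.+1 (isT : 0 < k.+1) k1n) => o2 O2.
have bk : b k < k by have := code_a_above V k0 kn; rewrite ak.
have bo : b k = o by apply: (crossing_uniq O bk); case: (code_col V kn).
have ko2 : k = o2 by apply: (crossing_uniq O2).
have om := crossing_lt O.
have sgo : sg o = k.
  have := crossing_reach O; case: (ltnP k (sg o)) => H2 H; last by lia.
  by have := crossing_uniq O2 (ltn_trans om (ltnSn k)) H2; lia.
have on : o < n by lia.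
have tgk : tg k = o by rewrite -sgo (sgK P on).
lia.
Qed.

Lemma code_b_crossing n sg tg a b : bij_pair n sg tg -> cnm_code n sg tg a b ->
  sole_crossings n sg -> sole_crossings n tg -> fixpoint_free n sg ->
  forall k, 0 < k -> k < n -> b k < k /\ k <= sg (b k).
Proof.
move=> P V Cs Ct N k k0 kn.
have bk : b k <> k := code_a_neq (bij_pairC P) (cnm_codeC V) Ct (fixpoint_freeC P N) k0 kn.
case: (code_col V kn) => H1 _ H3; split => //.
case: (ltngtP (b k) k) => // H.
have ar := code_b_left V k0 kn.
case: (code_row V (code_b_lt P V kn)) => _ _ H4.
case: (Ct k k0 kn) => o' O'.
have Eo := crossing_uniq O' ar (leq_trans (ltnW H) H4).
have k1n : k.+1 < n by have := tg_lt P kn; lia.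
case: (Ct k.+1 (isT : 0 < k.+1) k1n) => o2 O2.
have e1 : k = o2 by apply: (crossing_uniq O2); lia.
have e2 : o' = o2.
  by apply: (crossing_uniq O2); [have := crossing_lt O'; lia | rewrite -Eo; lia].
by have := crossing_lt O'; lia.
Qed.

Definition first_crossing (sg : nat -> nat) k := find (fun i => k <= sg i) (iota 0 k).

Lemma first_crossing_eq sg k o : sole_crossing sg k o -> first_crossing sg k = o.
Proof.
move=> O; have hs : has (fun i => k <= sg i) (iota 0 k).
  by apply/hasP; exists o; [rewrite mem_iota /=; exact: crossing_lt O | exact: crossing_reach O].
have lt_k : first_crossing sg k < k by move: hs; rewrite has_find size_iota.
by apply: (crossing_uniq O lt_k); have := nth_find 0 hs; rewrite nth_iota.
Qed.

Lemma code_b_first_crossing n sg tg a b : bij_pair n sg tg -> cnm_code n sg tg a b ->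
  sole_crossings n sg -> sole_crossings n tg -> fixpoint_free n sg ->
  forall i, i < n -> b i = first_crossing sg i.
Proof.
move=> P V Cs Ct N i iN; case: (posnP i) => [->|i0]; first by rewrite (code_b0 V).
case: (code_b_crossing P V Cs Ct N i0 iN) => h1 h2.
case: (Cs i i0 iN) => o O.
by rewrite (first_crossing_eq O) (crossing_uniq O h1 h2).
Qed.

Lemma first_crossing_code_rows n sg tg : bij_pair n sg tg ->
  sole_crossings n sg -> sole_crossings n tg -> fixpoint_free n sg ->
  code_rows n sg tg (first_crossing tg) (first_crossing sg).
Proof.
move=> P Cs Ct N; split => //.
- move=> i i0 iN; case: (Ct i i0 iN) => o' O'; rewrite (first_crossing_eq O').
  case: (posnP o') => [->|o0]; first by [].
  have o'i := crossing_lt O'.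
  case: (Cs o' o0 (ltn_trans o'i iN)) => o O; rewrite (first_crossing_eq O).
  by have := crossing_lt O; lia.
- move=> i iN; have sgi := N i iN.
  have rowsg : 0 < sg i -> i < sg i -> first_crossing sg (sg i) = i.
    move=> s0 isg; case: (Cs (sg i) s0 (sg_lt P iN)) => o O; rewrite (first_crossing_eq O).
    by symmetry; apply: (crossing_uniq O).
  case: (posnP i) => [i0|i0].
    subst i; have sg0 : 0 < sg 0 by lia.
    by split => //; right; exact: (rowsg sg0 sg0).
  case: (Ct i i0 iN) => o' O'; rewrite (first_crossing_eq O').
  have o'i := crossing_lt O'.
  split; last exact: crossing_reach O'.
  + case: (ltnP (sg i) i) => H; last by lia.
    by have := crossing_uniq O' H (eq_leq (esym (sgK P iN))); lia.
  + case: (ltngtP (sg i) i) => H //.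
      by left; symmetry; apply: (crossing_uniq O' H); rewrite (sgK P iN).
    by right; apply: rowsg => //; lia.
Qed.

Lemma first_crossing_code n sg tg : bij_pair n sg tg ->
  sole_crossings n sg -> sole_crossings n tg -> fixpoint_free n sg ->
  cnm_code n sg tg (first_crossing tg) (first_crossing sg).
Proof.
move=> P Cs Ct N; split; first exact: first_crossing_code_rows.
exact: (first_crossing_code_rows (bij_pairC P) Ct Cs (fixpoint_freeC P N)).
Qed.

Definition single_hook n (sg : nat -> nat) k :=
  exists h, [/\ h < n, maxn h (sg h) = k & forall i, i < n -> maxn i (sg i) = k -> i = h].

Lemma single_hookC n sg tg k : bij_pair n sg tg -> single_hook n sg k -> single_hook n tg k.
Proof.
move=> P [h [hn hk hu]]; exists (sg h); split.
- exact: (sg_lt P hn).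
- by rewrite (sgK P hn) maxnC.
- move=> j jn E; have := hu (tg j) (tg_lt P jn); rewrite (tgK P jn) maxnC => /(_ E) <-.
  by rewrite (tgK P jn).
Qed.

Section Hooks.
Variables (n : nat) (sg : nat -> nat).
Hypothesis N : fixpoint_free n sg.

Lemma single_hook_of_sole_crossings tg : bij_pair n sg tg -> sole_crossings n sg ->
  forall k, 0 < k -> k.+1 < n -> single_hook n sg k.
Proof.
move=> P Cs k k0 k1n; have kn : k < n by lia.
case: (Cs k k0 kn) => o O; case: (Cs k.+1 (isT : 0 < k.+1) k1n) => o2 O2.
have om := crossing_lt O; have on : o < n by lia.
have sgoO := crossing_reach O; have sgk := N kn.
case: (eqVneq (sg o) k) => [so|so].
  exists o; split => //; first by rewrite so; lia.
  move=> i iN; case: (leqP i (sg i)) => H E.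
    have si : sg i = k by lia.
    case: (ltngtP i k) => H2; last by move: sgk; rewrite -{1}H2 si H2.
      by rewrite -(sgK P iN) si -so (sgK P on).
    lia.
  have ik : i = k by lia.
  exfalso; rewrite ik in H iN.
  have H3 := crossing_reach O2.
  case: (ltnP o2 k) => H4.
    by have E2 := crossing_uniq O H4 (ltnW H3); move: H3; rewrite E2 so; lia.
  have E3 : o2 = k by have := crossing_lt O2; lia.
  by rewrite E3 in H3; lia.
exists k; split => //.
- case: (leqP (sg k) k) => H; first by lia.
  have E1 : k = o2 by apply: (crossing_uniq O2).
  have E2 : o = o2 by apply: (crossing_uniq O2); lia.
  lia.
- move=> i iN; case: (leqP i (sg i)) => H E; last by lia.
  have si : sg i = k by lia.
  case: (ltngtP i k) => H2 //; last by lia.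
  by move: so; rewrite -(crossing_uniq O H2 (eq_leq (esym si))) si eqxx.
Qed.

Lemma sole_crossings_of_single_hooks : 1 < n ->
  (forall k, 0 < k -> k.+1 < n -> single_hook n sg k) -> sole_crossings n sg.
Proof.
move=> n1 H; elim => // k IH _ kn.
case: (posnP k) => [->|k0].
  exists 0; split => //; last by move=> i i1 _; lia.
  by have := N (ltnW n1); lia.
have kn' : k < n by lia.
case: (IH k0 kn') => o O.
have om := crossing_lt O; have on : o < n by lia.
have sgo := crossing_reach O; have sgk := N kn'.
case: (H k k0 kn) => h [hn hk hu].
case: (eqVneq (sg o) k) => [so|so].
  exists k; split => //.
    case: (ltngtP k (sg k)) => // H1; last by exfalso; apply: sgk; symmetry.
    have E1 := hu k kn' ltac:(lia).
    have E2 := hu o on ltac:(lia).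
    lia.
  move=> i ik Hi; case: (ltnP i k) => H1; last by lia.
  by have E := crossing_uniq O H1 (leq_trans (leqnSn k) Hi); rewrite E so in Hi; lia.
exists o; split => //; first lia; first lia.
move=> i ik Hi; case: (ltnP i k) => H1; first by apply: (crossing_uniq O H1); lia.
have ik' : i = k by lia.
rewrite ik' in Hi; exfalso.
move: hk; case: (leqP h (sg h)) => H2 E; last first.
  have hk' : h = k by lia.
  by rewrite hk' in H2; lia.
have shk : sg h = k by lia.
case: (ltngtP h k) => H3; last by apply: sgk; rewrite -{1}H3 shk.
  by move: so; rewrite -(crossing_uniq O H3 (eq_leq (esym shk))) shk eqxx.
lia.
Qed.

End Hooks.

Section Children.
Variable n : nat.
Implicit Types (M : 'M[int]_n) (p q : 'I_n * 'I_n).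

Definition has_right M p := [exists j : 'I_n, (val p.2 < val j) && vertex M (p.1, j)].
Definition has_below M p := [exists i : 'I_n, (val p.1 < val i) && vertex M (i, p.2)].
Definition cnm_xor M := forall p, vertex M p -> ~~ is_root p -> has_above M p (+) has_left M p.

Definition near_right M q (j : 'I_n) :=
  [/\ val q.2 < val j, vertex M (q.1, j) &
      forall j' : 'I_n, val q.2 < val j' -> val j' < val j -> ~~ vertex M (q.1, j')].
Definition near_below M q (i : 'I_n) :=
  [/\ val q.1 < val i, vertex M (i, q.2) &
      forall i' : 'I_n, val q.1 < val i' -> val i' < val i -> ~~ vertex M (i', q.2)].

Lemma near_right_ex M q : has_right M q -> exists j, near_right M q j.
Proof.
case/existsP => j0 Hj0.
pose P (j : 'I_n) := (val q.2 < val j) && vertex M (q.1, j).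
case: (@arg_minnP _ j0 P (fun j : 'I_n => val j) Hj0) => j /andP [h1 h2] hmin.
exists j; split => // j' l1 l2; apply/negP => v.
have := hmin j'; rewrite /P l1 v => /(_ isT); lia.
Qed.

Lemma near_below_ex M q : has_below M q -> exists i, near_below M q i.
Proof.
case/existsP => i0 Hi0.
pose P (i : 'I_n) := (val q.1 < val i) && vertex M (i, q.2).
case: (@arg_minnP _ i0 P (fun i : 'I_n => val i) Hi0) => i /andP [h1 h2] hmin.
exists i; split => // i' l1 l2; apply/negP => v.
have := hmin i'; rewrite /P l1 v => /(_ isT); lia.
Qed.

Lemma near_right_uniq M q j j' : near_right M q j -> near_right M q j' -> j = j'.
Proof.
case=> h1 h2 h3 [h1' h2' h3']; apply: val_inj.
case: (ltngtP (val j) (val j')) => // H.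
  by move: (h3' j h1 H); rewrite h2.
by move: (h3 j' h1' H); rewrite h2'.
Qed.

Lemma near_below_uniq M q i i' : near_below M q i -> near_below M q i' -> i = i'.
Proof.
case=> h1 h2 h3 [h1' h2' h3']; apply: val_inj.
case: (ltngtP (val i) (val i')) => // H.
  by move: (h3' i h1 H); rewrite h2.
by move: (h3 i' h1' H); rewrite h2'.
Qed.

Lemma not_root_right q (j : 'I_n) : val q.2 < val j -> ~~ is_root (q.1, j).
Proof. by move=> H; rewrite /is_root /= negb_and -!lt0n (leq_ltn_trans (leq0n _) H) orbT. Qed.
Lemma not_root_below q (i : 'I_n) : val q.1 < val i -> ~~ is_root (i, q.2).
Proof. by move=> H; rewrite /is_root /= negb_and -!lt0n (leq_ltn_trans (leq0n _) H). Qed.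

Lemma child_right M q j : cnm_xor M -> vertex M q -> near_right M q j ->
  is_parent M q (q.1, j).
Proof.
move=> X vq [h1 h2 h3].
have hl : has_left M (q.1, j) by apply/existsP; exists q.2; rewrite h1 /= -surjective_pairing.
have ha : ~~ has_above M (q.1, j).
  by move: (X _ h2 (not_root_right h1)); rewrite hl addbT.
rewrite /is_parent h2 (not_root_right h1) vq (negbTE ha) /= eqxx h1 /=.
apply/forallP => j'; apply/implyP => /andP [l1 l2]; exact: h3.
Qed.

Lemma child_below M q i : cnm_xor M -> vertex M q -> near_below M q i ->
  is_parent M q (i, q.2).
Proof.
move=> X vq [h1 h2 h3].
have ha : has_above M (i, q.2) by apply/existsP; exists q.1; rewrite h1 /= -surjective_pairing.
rewrite /is_parent h2 (not_root_below h1) vq ha /= eqxx h1 /=.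
apply/forallP => i'; apply/implyP => /andP [l1 l2]; exact: h3.
Qed.

Lemma parent_cases M q p : is_parent M q p ->
  vertex M q /\
  ((p.1 = q.1 /\ near_right M q p.2) \/ (p.2 = q.2 /\ near_below M q p.1)).
Proof.
case: p => p1 p2.
rewrite /is_parent => /andP [/andP [/andP [vp _] vq] H].
split => //; move: H.
case: ifP => _ /andP [/andP [/eqP E l] /forallP F]; simpl in *.
  right; split; first by rewrite E.
  split => //; first by rewrite E.
  move=> i' l1 l2; move: (F i'); rewrite l1 l2 /= E; exact.
left; split; first by rewrite E.
split => //; first by rewrite E.
move=> j' l1 l2; move: (F j'); rewrite l1 l2 /= E; exact.
Qed.

Lemma children_right_neq0 M q : cnm_xor M -> vertex M q -> has_right M q ->
  #|children M q| != 0.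
Proof.
move=> X vq /near_right_ex [j H].
rewrite -lt0n; apply/card_gt0P; exists (q.1, j); rewrite inE.
exact: child_right.
Qed.

Lemma children_below_neq0 M q : cnm_xor M -> vertex M q -> has_below M q ->
  #|children M q| != 0.
Proof.
move=> X vq /near_below_ex [i H].
rewrite -lt0n; apply/card_gt0P; exists (i, q.2); rewrite inE.
exact: child_below.
Qed.

Lemma children_eq0 M q : ~~ has_right M q -> ~~ has_below M q -> #|children M q| = 0.
Proof.
move=> hr hb; apply/eqP; rewrite cards_eq0; apply/eqP/setP => p; rewrite !inE.
apply/negP => /parent_cases [vq [[E [h1 h2 _]]|[E [h1 h2 _]]]].
  by move: hr => /existsP; apply; exists p.2; rewrite h1 h2.
by move: hb => /existsP; apply; exists p.1; rewrite h1 h2.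
Qed.

Lemma children_eq2 M q : cnm_xor M -> vertex M q -> has_right M q -> has_below M q ->
  #|children M q| = 2.
Proof.
move=> X vq /near_right_ex [j Hj] /near_below_ex [i Hi].
have -> : children M q = [set (q.1, j); (i, q.2)].
  apply/setP => -[p1 p2]; rewrite !inE; apply/idP/idP.
    case/parent_cases => _ [[/= E H]|[/= E H]].
      by rewrite E -(near_right_uniq Hj H) eqxx.
    by rewrite E -(near_below_uniq Hi H) eqxx orbT.
  by case/orP => /eqP ->; [apply: child_right | apply: child_below].
rewrite cards2; case: eqP => //= E.
case: Hj => h1 _ _; case: Hi => h1' _ _.
by move: h1'; rewrite -[i](congr1 fst E) /=; lia.
Qed.

End Children.

Definition rel_tr (T : nat -> nat -> bool) := fun i j => T j i.

(* [cnm_rel N T sg tg]: T is the vertex set of a CNM of size N with leaf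
   permutation sg, stated on nat. Condition (4) on the number of children is
   replaced by: the leaf of row i is its rightmost vertex and the leaf of
   column j its lowest one. *)
Definition cnm_rel N (T : nat -> nat -> bool) (sg tg : nat -> nat) :=
  [/\ T 0 0,
      (forall i j, T i j -> i < N /\ j < N),
      (forall i j, T i j -> 0 < i + j ->
         ((exists i', i' < i /\ T i' j) \/ (exists j', j' < j /\ T i j')) /\
         ~ ((exists i', i' < i /\ T i' j) /\ (exists j', j' < j /\ T i j'))),
      (forall i j, T i j -> j <= sg i /\ i <= tg j) &
      (forall i, i < N -> T i (sg i)) /\ (forall j, j < N -> T (tg j) j)].

Lemma cnm_relC N T sg tg : cnm_rel N T sg tg -> cnm_rel N (rel_tr T) tg sg.
Proof.
case=> h0 hb hx hr [hl1 hl2]; split => //.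
- by move=> i j /hb [].
- move=> i j /= Tij ij; case: (hx j i Tij ltac:(lia)) => [[H|H] H2].
    by split; [right | move=> [A B]; apply: H2].
  by split; [left | move=> [A B]; apply: H2].
- by move=> i j /hr [].
Qed.

Definition first_in N (T : nat -> nat -> bool) i := find (T i) (iota 0 N).

Section CnmRel.
Variables (N : nat) (T : nat -> nat -> bool) (sg tg : nat -> nat).
Hypotheses (P : bij_pair N sg tg) (G : cnm_rel N T sg tg).

Lemma cnm_rel00 : T 0 0. Proof. by case: G. Qed.
Lemma cnm_rel_lt i j : T i j -> i < N /\ j < N. Proof. by case: G => _ H _ _ _; apply: H. Qed.
Lemma cnm_rel_xor i j : T i j -> 0 < i + j ->
         ((exists i', i' < i /\ T i' j) \/ (exists j', j' < j /\ T i j')) /\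
         ~ ((exists i', i' < i /\ T i' j) /\ (exists j', j' < j /\ T i j')).
Proof. by case: G => _ _ H _ _; apply: H. Qed.
Lemma cnm_rel_leaf_max i j : T i j -> j <= sg i /\ i <= tg j.
Proof. by case: G => _ _ _ H _; apply: H. Qed.
Lemma cnm_rel_leaf i : i < N -> T i (sg i). Proof. by case: G => _ _ _ _ [H _]; apply: H. Qed.

Lemma first_inP i : i < N ->
  [/\ first_in N T i < N, T i (first_in N T i) & forall j, j < first_in N T i -> ~~ T i j].
Proof.
move=> iN; rewrite /first_in.
have hs : has (T i) (iota 0 N).
  apply/hasP; exists (sg i); last exact: cnm_rel_leaf.
  by rewrite mem_iota /=; have := sg_lt P iN; lia.
have := hs; rewrite has_find size_iota => H; split => //.
  by have := nth_find 0 hs; rewrite nth_iota.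
move=> j jf; have jN : j < N by lia.
by have := before_find 0 jf; rewrite nth_iota // add0n => ->.
Qed.

Lemma first_in_min i j : T i j -> first_in N T i <= j.
Proof.
move=> Tij; have [iN jN] := cnm_rel_lt Tij.
case: (first_inP iN) => _ _ H; case: (leqP (first_in N T i) j) => // H2.
by move: (H j H2); rewrite Tij.
Qed.

Lemma cnm_rel_right i j : T i j -> (exists j', j < j' /\ T i j') <-> j < sg i.
Proof.
move=> Tij; have [iN jN] := cnm_rel_lt Tij; split.
  by case=> j' [l1 l2]; have := cnm_rel_leaf_max l2; lia.
by move=> H; exists (sg i); split => //; exact: cnm_rel_leaf.
Qed.

Lemma cnm_rel_below i j : T i j -> (exists i', i < i' /\ T i' j) <-> i < tg j.
Proof.
move=> Tij; have [iN jN] := cnm_rel_lt Tij; split.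
  by case=> i' [l1 l2]; have := cnm_rel_leaf_max l2; lia.
move=> H; exists (tg j); split => //.
by case: G => _ _ _ _ [_ H2]; apply: H2.
Qed.

Lemma cnm_rel_right_below i j : T i j -> (j < sg i) = (i < tg j).
Proof.
move=> Tij; have [iN jN] := cnm_rel_lt Tij; have [r1 r2] := cnm_rel_leaf_max Tij.
apply/idP/idP => H.
  case: (ltngtP i (tg j)) => // E; first lia.
  by move: H; rewrite E (tgK P jN) ltnn.
case: (ltngtP j (sg i)) => // E; first lia.
by move: H; rewrite E (sgK P iN) ltnn.
Qed.

End CnmRel.

Lemma first_in_trP N T sg tg j : bij_pair N sg tg -> cnm_rel N T sg tg -> j < N ->
  [/\ first_in N (rel_tr T) j < N, T (first_in N (rel_tr T) j) j &
      forall i, i < first_in N (rel_tr T) j -> ~~ T i j].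
Proof. move=> P G; exact: (first_inP (bij_pairC P) (cnm_relC G)). Qed.

Lemma first_in_tr_min N T sg tg i j : bij_pair N sg tg -> cnm_rel N T sg tg -> T i j ->
  first_in N (rel_tr T) j <= i.
Proof. move=> P G Tij; exact: (first_in_min (bij_pairC P) (cnm_relC G) (Tij : rel_tr T j i)). Qed.

Lemma cnm_rel_first N T sg tg i j : bij_pair N sg tg -> cnm_rel N T sg tg -> T i j ->
  first_in N T i = j \/ first_in N (rel_tr T) j = i.
Proof.
move=> P G Tij; have [iN jN] := cnm_rel_lt G Tij.
case: (eqVneq (first_in N T i) j) => [->|h1]; first by left.
case: (eqVneq (first_in N (rel_tr T) j) i) => [->|h2]; first by right.
exfalso.
have l1 := first_in_min P G Tij; have l2 := first_in_tr_min P G Tij.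
case: (first_inP P G iN) => _ t1 _; case: (first_in_trP P G jN) => _ t2 _.
case: (posnP (i + j)) => ij.
  have i0 : i = 0 by lia.
  have j0 : j = 0 by lia.
  by move: h1; rewrite i0 j0; have := first_in_min P G (cnm_rel00 G); lia.
case: (cnm_rel_xor G Tij ij) => _; apply; split.
  by exists (first_in N (rel_tr T) j); split => //; lia.
by exists (first_in N T i); split => //; lia.
Qed.

Lemma cnm_rel_code_rows N T sg tg : bij_pair N sg tg -> cnm_rel N T sg tg ->
  code_rows N sg tg (first_in N T) (first_in N (rel_tr T)).
Proof.
move=> P G; split.
- by have := first_in_min P G (cnm_rel00 G); lia.
- move=> i i0 iN.
  case: (first_inP P G iN) => an' t1 hmin.
  case: (cnm_rel_xor G t1 ltac:(lia)) => [[[i' [l1 l2]]|[j' [l1 l2]]] _].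
    by have := first_in_tr_min P G l2; lia.
  by move: (hmin j' l1); rewrite l2.
- move=> i iN; case: (first_inP P G iN) => an' t1 _.
  have [r1 r2] := cnm_rel_leaf_max G t1.
  split => //.
  case: (cnm_rel_first P G (cnm_rel_leaf G iN)) => H; [by left | by right].
Qed.

Lemma cnm_rel_code N T sg tg : bij_pair N sg tg -> cnm_rel N T sg tg ->
  cnm_code N sg tg (first_in N T) (first_in N (rel_tr T)).
Proof.
move=> P G; split; first exact: cnm_rel_code_rows.
exact: (cnm_rel_code_rows (bij_pairC P) (cnm_relC G)).
Qed.

Definition code_rel N (a b : nat -> nat) i j := [&& i < N, j < N & (a i == j) || (b j == i)].

Lemma code_rel_lt N a b i j : code_rel N a b i j -> i < N /\ j < N.
Proof. by case/and3P. Qed.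

Section CodeRel.
Variables (N : nat) (sg tg a b : nat -> nat).
Hypotheses (P : bij_pair N sg tg) (V : cnm_code N sg tg a b).

Lemma code_rel_row_min i j : code_rel N a b i j -> a i <= j.
Proof.
case/and3P => iN jN /orP [/eqP -> //|/eqP bj].
case: (posnP j) => [j0|j0].
  by move: bj; rewrite j0 (code_b0 V) => <-; rewrite (code_a0 V).
by have := code_b_left V j0 jN; rewrite bj; lia.
Qed.

Lemma code_rel_col_min i j : code_rel N a b i j -> b j <= i.
Proof.
case/and3P => iN jN /orP [/eqP aj|/eqP -> //].
case: (posnP i) => [i0|i0].
  by move: aj; rewrite i0 (code_a0 V) => <-; rewrite (code_b0 V).
by have := code_a_above V i0 iN; rewrite aj; lia.
Qed.

Lemma code_rel_a i : i < N -> code_rel N a b i (a i).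
Proof. by move=> iN; rewrite /code_rel iN (code_a_lt P V iN) eqxx. Qed.
Lemma code_rel_b j : j < N -> code_rel N a b (b j) j.
Proof. by move=> jN; rewrite /code_rel jN (code_b_lt P V jN) eqxx orbT. Qed.

Hypothesis N0 : 0 < N.

Lemma code_rel_above i j : j < N -> (exists i', i' < i /\ code_rel N a b i' j) <-> b j < i.
Proof.
move=> jN; split.
  by case=> i' [l1 l2]; have := code_rel_col_min l2; lia.
by move=> H; exists (b j); split => //; exact: code_rel_b.
Qed.

Lemma code_rel_left i j : i < N -> (exists j', j' < j /\ code_rel N a b i j') <-> a i < j.
Proof.
move=> iN; split.
  by case=> j' [l1 l2]; have := code_rel_row_min l2; lia.
by move=> H; exists (a i); split => //; exact: code_rel_a.
Qed.

Lemma code_rel_cnm : cnm_rel N (code_rel N a b) sg tg.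
Proof.
split.
- by rewrite /code_rel N0 (code_a0 V) eqxx.
- exact: code_rel_lt.
- move=> i j Tij ij; have /and3P [iN jN _] := Tij.
  rewrite (code_rel_above i jN) (code_rel_left j iN).
  have r1 := code_rel_row_min Tij; have c1 := code_rel_col_min Tij.
  case/and3P: Tij => _ _ /orP [/eqP aj|/eqP bj].
    have bji : b j <> i.
      move=> bj; case: (posnP i) => [i0|i0].
        by move: aj; rewrite i0 (code_a0 V); lia.
      by have := code_a_above V i0 iN; rewrite aj bj ltnn.
    split; [left; lia | lia].
  case: (eqVneq (a i) j) => [aj|aj].
    case: (posnP i) => [i0|i0].
      by move: aj; rewrite i0 (code_a0 V); lia.
    by have := code_a_above V i0 iN; rewrite aj bj ltnn.
  split; [right; lia | lia].
- move=> i j /and3P [iN jN /orP [/eqP <-|/eqP <-]].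
    by case: (code_row V iN).
  by case: (code_col V jN).
- split.
    move=> i iN; rewrite /code_rel iN (sg_lt P iN) /=.
    by case: (code_row V iN) => _ [->|->] _; rewrite eqxx ?orbT.
  move=> j jN; rewrite /code_rel jN (tg_lt P jN) /=.
  by case: (code_col V jN) => _ [->|->] _; rewrite eqxx ?orbT.
Qed.

Lemma first_in_code_rel i : i < N -> first_in N (code_rel N a b) i = a i.
Proof.
move=> iN.
have G := code_rel_cnm.
have l1 := first_in_min P G (code_rel_a iN).
case: (first_inP P G iN) => _ t _.
have := code_rel_row_min t; lia.
Qed.

End CodeRel.

Section Matrices.
Variable n : nat.
Local Notation N := n.+1.
Implicit Types (M : 'M[int]_N) (R : nat -> nat -> bool).

Definition represents M R :=
  (forall x y : 'I_N, vertex M (x, y) = R x y) /\ (forall i j, R i j -> i < N /\ j < N).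

Definition vertex_rel M i j : bool := [&& i < N, j < N & vertex M (inord i, inord j)].

Lemma represents_vertex_rel M : represents M (vertex_rel M).
Proof.
split; last by move=> i j /and3P [].
by move=> x y; rewrite /vertex_rel !ltn_ord !inord_val.
Qed.

Definition rel_mx R : 'M[int]_N := \matrix_(i, j) (if R i j then 1%R else 0%R).

Lemma zero_one_rel_mx R : zero_one (rel_mx R).
Proof. by move=> i j; rewrite mxE; case: (R i j); [right | left]. Qed.

Lemma represents_rel_mx R : (forall i j, R i j -> i < N /\ j < N) -> represents (rel_mx R) R.
Proof. by split=> // x y; rewrite /vertex /= mxE; case: (R x y). Qed.

Lemma represents_eq M R1 R2 : represents M R1 -> represents M R2 -> R1 =2 R2.
Proof.
move=> [E1 B1] [E2 B2] i j.
case: (boolP (R1 i j)) => r1; case: (boolP (R2 i j)) => r2 //.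
  have [iN jN] := B1 _ _ r1.
  by have := E1 (Ordinal iN) (Ordinal jN); rewrite E2 /= r1 (negbTE r2).
have [iN jN] := B2 _ _ r2.
by have := E1 (Ordinal iN) (Ordinal jN); rewrite E2 /= r2 (negbTE r1).
Qed.

Lemma represents_eq_rel M R1 R2 : represents M R1 -> R1 =2 R2 -> represents M R2.
Proof.
move=> [E B] E12; split=> [x y|i j]; first by rewrite E E12.
by rewrite -E12; apply: B.
Qed.

Lemma represents_inj M M' R : zero_one M -> zero_one M' ->
  represents M R -> represents M' R -> M = M'.
Proof.
move=> Z Z' [E _] [E' _]; apply/matrixP => x y.
have : vertex M (x, y) = vertex M' (x, y) by rewrite E E'.
by rewrite /vertex /=; case: (Z x y) => ->; case: (Z' x y) => ->.
Qed.

Section Represents.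
Variables (M : 'M[int]_N) (R : nat -> nat -> bool).
Hypothesis HR : represents M R.

Lemma vertexE x y : vertex M (x, y) = R x y. Proof. by case: HR. Qed.
Lemma represents_lt i j : R i j -> i < N /\ j < N. Proof. by case: HR => _; apply. Qed.

Lemma has_aboveP (x y : 'I_N) : has_above M (x, y) <-> exists i', i' < x /\ R i' y.
Proof.
split; first by case/existsP => k /andP [l v]; exists k; rewrite -vertexE.
case=> k [l t]; have [kN _] := represents_lt t.
by apply/existsP; exists (Ordinal kN); rewrite /= l vertexE.
Qed.

Lemma has_leftP (x y : 'I_N) : has_left M (x, y) <-> exists j', j' < y /\ R x j'.
Proof.
split; first by case/existsP => k /andP [l v]; exists k; rewrite -vertexE.
case=> k [l t]; have [_ kN] := represents_lt t.
by apply/existsP; exists (Ordinal kN); rewrite /= l vertexE.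
Qed.

Lemma has_rightP (x y : 'I_N) : has_right M (x, y) <-> exists j', y < j' /\ R x j'.
Proof.
split; first by case/existsP => k /andP [l v]; exists k; rewrite -vertexE.
case=> k [l t]; have [_ kN] := represents_lt t.
by apply/existsP; exists (Ordinal kN); rewrite /= l vertexE.
Qed.

Lemma has_belowP (x y : 'I_N) : has_below M (x, y) <-> exists i', x < i' /\ R i' y.
Proof.
split; first by case/existsP => k /andP [l v]; exists k; rewrite -vertexE.
case=> k [l t]; have [kN _] := represents_lt t.
by apply/existsP; exists (Ordinal kN); rewrite /= l vertexE.
Qed.

End Represents.

Definition perm_fun (s : 'S_N) i := val (s (inord i)).
Definition perm_inv_fun (s : 'S_N) i := val ((s^-1)%g (inord i)).

Lemma perm_bij_pair (s : 'S_N) : bij_pair N (perm_fun s) (perm_inv_fun s).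
Proof.
split=> i iN; rewrite /perm_fun /perm_inv_fun ?ltn_ord //.
  by rewrite inord_val permK; apply: inordK.
by rewrite inord_val permKV; apply: inordK.
Qed.

Lemma perm_funE (s : 'S_N) (x : 'I_N) : perm_fun s x = s x.
Proof. by rewrite /perm_fun inord_val. Qed.

Lemma perm_inv_funE (s : 'S_N) (y : 'I_N) : perm_inv_fun s y = (s^-1)%g y.
Proof. by rewrite /perm_inv_fun inord_val. Qed.

Lemma perm_mxE (s : 'S_N) (i j : 'I_N) : (perm_mx s : 'M[int]_N) i j = (s i == j)%:R%R.
Proof. by rewrite /perm_mx /row_perm !mxE. Qed.

Lemma perm_mx_eq1 (s : 'S_N) (x y : 'I_N) : ((perm_mx s : 'M[int]_N) x y == 1%R) = (s x == y).
Proof. by rewrite perm_mxE; case: (s x == y). Qed.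

Lemma leaf_mx_perm M (s : 'S_N) : leaf_mx M = perm_mx s ->
  forall x y : 'I_N, is_leaf M (x, y) = (s x == y).
Proof.
move=> L x y; have := congr1 (fun A : 'M[int]_N => A x y) L; rewrite /= perm_mxE !mxE.
by case: (is_leaf M (x, y)); case: (s x == y).
Qed.

Lemma leaf_no_right M q : cnm_xor M -> is_leaf M q -> ~~ has_right M q.
Proof.
move=> X /andP [v /eqP c]; apply/negP => hr.
by move: (children_right_neq0 X v hr); rewrite c.
Qed.

Lemma leaf_no_below M q : cnm_xor M -> is_leaf M q -> ~~ has_below M q.
Proof.
move=> X /andP [v /eqP c]; apply/negP => hb.
by move: (children_below_neq0 X v hb); rewrite c.
Qed.

Section CnmRelOfCNM.
Variables (M : 'M[int]_N) (R : nat -> nat -> bool) (s : 'S_N).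
Hypotheses (HR : represents M R) (C : is_CNM M) (L : leaf_mx M = perm_mx s).

Let X : cnm_xor M. Proof. by case: C. Qed.

Lemma represents_xor i j : R i j -> 0 < i + j ->
  ((exists i', i' < i /\ R i' j) \/ (exists j', j' < j /\ R i j')) /\
  ~ ((exists i', i' < i /\ R i' j) /\ (exists j', j' < j /\ R i j')).
Proof.
move=> t ij; have [iN jN] := represents_lt HR t.
set x := Ordinal iN; set y := Ordinal jN.
have nr : ~~ is_root (x, y) by apply/negP => /andP [/eqP i0 /eqP j0]; rewrite /= in i0 j0; lia.
have := @X (x, y); rewrite (vertexE HR) // => /(_ t nr).
have EA := has_aboveP HR x y; have EL := has_leftP HR x y.
case: (boolP (has_above M (x, y))) => ha; case: (boolP (has_left M (x, y))) => hl //= _.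
  split; first by left; apply/EA.
  by move=> [_ H]; move/negP: hl; apply; apply/EL.
split; first by right; apply/EL.
by move=> [H _]; move/negP: ha; apply; apply/EA.
Qed.

Lemma represents_leaf_max i j : R i j -> j <= perm_fun s i /\ i <= perm_inv_fun s j.
Proof.
move=> t; have [iN jN] := represents_lt HR t.
set x := Ordinal iN; set y := Ordinal jN.
have leaf_x : is_leaf M (x, s x) by rewrite (leaf_mx_perm L).
have leaf_y : is_leaf M ((s^-1)%g y, y) by rewrite (leaf_mx_perm L) permKV.
have := leaf_no_right X leaf_x; have := leaf_no_below X leaf_y.
rewrite (perm_funE s x) (perm_inv_funE s y).
move/negP => nb /negP nr; split; rewrite leqNgt; apply/negP => lt.
  by apply: nr; apply/(has_rightP HR); exists j.
by apply: nb; apply/(has_belowP HR); exists i.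
Qed.

Lemma cnm_rel_of_CNM : cnm_rel N R (perm_fun s) (perm_inv_fun s).
Proof.
have leafv (x : 'I_N) : R x (s x).
  by rewrite -(vertexE HR); have := leaf_mx_perm L x (s x); rewrite eqxx => /andP [].
case: C => _ root _ _ _; split.
- by rewrite -(vertexE HR ord0 ord0); apply: root.
- exact: represents_lt HR.
- exact: represents_xor.
- exact: represents_leaf_max.
- split => [i iN|j jN]; first by have := leafv (Ordinal iN); rewrite -perm_funE.
  by have := leafv ((s^-1)%g (Ordinal jN)); rewrite permKV -perm_inv_funE.
Qed.

End CnmRelOfCNM.

Section CNMOfCnmRel.
Variables (M : 'M[int]_N) (R : nat -> nat -> bool) (s : 'S_N).
Hypotheses (HR : represents M R) (G : cnm_rel N R (perm_fun s) (perm_inv_fun s)).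

Lemma cnm_rel_xor_mx : cnm_xor M.
Proof.
move=> [x y]; rewrite (vertexE HR) => t nr.
have xy : 0 < x + y by move: nr; rewrite /is_root /= negb_and => /orP [] /eqP; lia.
have EA := has_aboveP HR x y; have EL := has_leftP HR x y.
case: (cnm_rel_xor G t xy) => H1 H2.
case: (boolP (has_above M (x, y))) => ha; case: (boolP (has_left M (x, y))) => hl //=.
  by exfalso; apply: H2; split; [apply/EA | apply/EL].
by exfalso; case: H1 => H; [move/negP: ha | move/negP: hl]; apply; [apply/EA | apply/EL].
Qed.

Lemma has_right_cnm_rel (x y : 'I_N) : R x y -> has_right M (x, y) = (y < perm_fun s x).
Proof.
move=> t; apply/idP/idP.
  by move/(has_rightP HR) => [k [l tk]]; apply/(cnm_rel_right G t); exists k.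
by move/(cnm_rel_right G t) => [k [l tk]]; apply/(has_rightP HR); exists k.
Qed.

Lemma has_below_cnm_rel (x y : 'I_N) : R x y -> has_below M (x, y) = (x < perm_inv_fun s y).
Proof.
move=> t; apply/idP/idP.
  by move/(has_belowP HR) => [k [l tk]]; apply/(cnm_rel_below G t); exists k.
by move/(cnm_rel_below G t) => [k [l tk]]; apply/(has_belowP HR); exists k.
Qed.

Lemma children_cnm_rel (x y : 'I_N) : R x y ->
  #|children M (x, y)| = if y < perm_fun s x then 2 else 0.
Proof.
move=> t; have P := perm_bij_pair s.
have RB := cnm_rel_right_below P G t.
have X := cnm_rel_xor_mx; have v : vertex M (x, y) by rewrite (vertexE HR).
case: ifP => H.
  by apply: children_eq2; rewrite ?has_right_cnm_rel ?has_below_cnm_rel // -RB.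
by apply: children_eq0; rewrite ?has_right_cnm_rel ?has_below_cnm_rel // -?RB H.
Qed.

Lemma is_leaf_cnm_rel (x y : 'I_N) : is_leaf M (x, y) = (s x == y).
Proof.
rewrite /is_leaf (vertexE HR); case: (boolP (R x y)) => t /=; last first.
  apply/esym/negP => /eqP E; move/negP: t; apply.
  by have := cnm_rel_leaf G (ltn_ord x); rewrite perm_funE E.
have [r1 _] := cnm_rel_leaf_max G t.
rewrite children_cnm_rel //; case: ifP => H.
  by apply/esym/eqP => E; move: H; rewrite perm_funE E ltnn.
by apply/esym/eqP/val_inj => /=; rewrite -perm_funE; lia.
Qed.

Lemma CNM_of_cnm_rel : zero_one M -> is_CNM M /\ leaf_mx M = perm_mx s.
Proof.
move=> Z; split; last first.
  by apply/matrixP => x y; rewrite perm_mxE !mxE is_leaf_cnm_rel; case: (s x == y).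
split => //.
- move=> [x y]; rewrite /is_root (vertexE HR) /= => /andP [/eqP -> /eqP ->].
  exact: cnm_rel00 G.
- exact: cnm_rel_xor_mx.
- split=> [x|y].
    by exists (s x); rewrite (vertexE HR); have := cnm_rel_leaf G (ltn_ord x); rewrite perm_funE.
  exists ((s^-1)%g y); rewrite (vertexE HR).
  by have := cnm_rel_leaf G (ltn_ord ((s^-1)%g y)); rewrite perm_funE permKV.
- move=> [x y]; rewrite (vertexE HR) => t; rewrite children_cnm_rel //.
  by case: ifP; [right | left].
Qed.

End CNMOfCnmRel.

Lemma Lsubset_single_hook (s : 'S_N) k :
  (#|[set p in Lsubset N k.+1 | (perm_mx s : 'M[int]_N) p.1 p.2 == 1%R]| = 1) <->
  single_hook N (perm_fun s) k.
Proof.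
have memS (p : 'I_N * 'I_N) :
  (p \in [set p in Lsubset N k.+1 | (perm_mx s : 'M[int]_N) p.1 p.2 == 1%R]) =
  (maxn p.1 p.2 == k) && (s p.1 == p.2).
  case: p => [[x hx] [y hy]]; rewrite !inE /= perm_mx_eq1; congr (_ && _).
  by apply/idP/idP => [/orP [] /andP [/eqP h1 h2] | /eqP h]; apply/eqP; lia.
split.
  move/eqP/cards1P => [[x1 x2] E].
  have : (x1, x2) \in [set (x1, x2)] by rewrite inE.
  rewrite -E memS /= => /andP [/eqP mk /eqP sx].
  exists x1; split => //; first by rewrite perm_funE sx.
  move=> i iN mi.
  have : (inord i : 'I_N, s (inord i)) \in [set (x1, x2)].
    by rewrite -E memS /= inordK // eqxx andbT; apply/eqP; rewrite -mi.
  by rewrite inE => /eqP [<- _]; rewrite inordK.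
case=> h [hN hk hu].
apply/eqP/cards1P; exists (inord h, s (inord h)).
apply/setP => -[x y]; rewrite memS inE /=; apply/idP/idP.
  move=> /andP [/eqP mk /eqP sx].
  have xh : (x : nat) = h by apply: (hu x (ltn_ord x)); rewrite perm_funE sx.
  have -> : x = inord h by apply: val_inj; rewrite /= inordK.
  by rewrite -sx -{1}(inord_val x) xh.
move/eqP => [-> ->]; rewrite eqxx andbT inordK //.
by apply/eqP; rewrite -hk.
Qed.

Lemma perm_mx_diag_fixpoint_free (s : 'S_N) :
  (forall i : 'I_N, (perm_mx s : 'M[int]_N) i i != 1%R) <-> fixpoint_free N (perm_fun s).
Proof.
split=> H i; rewrite ?perm_mx_eq1.
  move=> iN E; move: (H (inord i)); rewrite perm_mx_eq1.
  by move/eqP; apply; apply: val_inj; rewrite /= inordK.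
by apply/eqP => E; apply: (H i (ltn_ord i)); rewrite perm_funE E.
Qed.

End Matrices.

Lemma eq_first_in N (T1 T2 : nat -> nat -> bool) : T1 =2 T2 -> first_in N T1 =1 first_in N T2.
Proof. by move=> E i; apply: eq_find => j; apply: E. Qed.

Lemma code_rel_tr N a b : rel_tr (code_rel N a b) =2 code_rel N b a.
Proof.
by move=> i j; rewrite /rel_tr /code_rel; case: (i < N); case: (j < N) => //=; rewrite orbC.
Qed.

Lemma eq_code_rel N a b a' b' : (forall i, i < N -> a i = a' i) ->
  (forall j, j < N -> b j = b' j) -> code_rel N a b =2 code_rel N a' b'.
Proof.
move=> Ea Eb i j; rewrite /code_rel.
by case: (ltnP i N) => iN; case: (ltnP j N) => jN //=; rewrite Ea ?Eb.
Qed.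

Lemma code_rel_inj N sg tg a b a' b' : bij_pair N sg tg -> 0 < N ->
  cnm_code N sg tg a b -> cnm_code N sg tg a' b' ->
  code_rel N a b =2 code_rel N a' b' -> ~ codes_differ N a b a' b'.
Proof.
move=> P N0 V V' E [i iN D].
have ea : a i = a' i.
  rewrite -(first_in_code_rel P V N0 iN) -(first_in_code_rel P V' N0 iN).
  exact: eq_first_in.
have eb : b i = b' i.
  rewrite -(first_in_code_rel (bij_pairC P) (cnm_codeC V) N0 iN).
  rewrite -(first_in_code_rel (bij_pairC P) (cnm_codeC V') N0 iN).
  by apply: eq_first_in => k l; rewrite -!code_rel_tr /rel_tr E.
by case: D; apply; rewrite ?ea ?eb.
Qed.

Lemma cnm_rel_code_relE N T sg tg : bij_pair N sg tg -> cnm_rel N T sg tg ->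
  T =2 code_rel N (first_in N T) (first_in N (rel_tr T)).
Proof.
move=> P G i j; rewrite /code_rel; case: (boolP (T i j)) => t.
  have [iN jN] := cnm_rel_lt G t; rewrite iN jN /=.
  by case: (cnm_rel_first P G t) => ->; rewrite eqxx ?orbT.
apply/esym/negP => /and3P [iN jN /orP [] /eqP E]; move/negP: t; apply; rewrite -E.
  by case: (first_inP P G iN).
by case: (first_in_trP P G jN).
Qed.

Section LeafPermutation.
Variables (n : nat) (s : 'S_n.+1).
Local Notation N := n.+1.
Local Notation sg := (perm_fun s).
Local Notation tg := (perm_inv_fun s).
Let P : bij_pair N sg tg := perm_bij_pair s.

Definition code_mx a b : 'M[int]_N := rel_mx n (code_rel N a b).

Lemma represents_code_mx a b : represents (code_mx a b) (code_rel N a b).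
Proof. exact/represents_rel_mx/code_rel_lt. Qed.

Lemma code_mx_CNM a b : cnm_code N sg tg a b ->
  is_CNM (code_mx a b) /\ leaf_mx (code_mx a b) = perm_mx s.
Proof.
move=> V; apply: CNM_of_cnm_rel (represents_code_mx a b) _ (zero_one_rel_mx _).
exact: code_rel_cnm P V (ltn0Sn n).
Qed.

Lemma unique_code_of_unique_CNM : (exists! M, is_CNM M /\ leaf_mx M = perm_mx s) ->
  exists a b, cnm_code N sg tg a b /\ ~ code_ambiguous N sg tg a b.
Proof.
case=> M [[C L] U]; have HR := represents_vertex_rel M.
have G := cnm_rel_of_CNM HR C L; have V := cnm_rel_code P G.
exists (first_in N (vertex_rel M)), (first_in N (rel_tr (vertex_rel M))).
split=> // [[a' [b' [V' D]]]].
have EM : M = code_mx a' b' by apply: U; exact: code_mx_CNM.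
have HR' : represents M (code_rel N a' b') by rewrite EM; exact: represents_code_mx.
apply: (code_rel_inj P (ltn0Sn n) V V' _ D) => i j.
by rewrite -(cnm_rel_code_relE P G) (represents_eq HR HR').
Qed.

Lemma unique_CNM_of_sole_crossings :
  sole_crossings N sg -> sole_crossings N tg -> fixpoint_free N sg ->
  exists! M, is_CNM M /\ leaf_mx M = perm_mx s.
Proof.
move=> Cs Ct Nf; have V := first_crossing_code P Cs Ct Nf.
exists (code_mx (first_crossing tg) (first_crossing sg)); split; first exact: code_mx_CNM.
move=> M [C L]; have HR := represents_vertex_rel M; set R := vertex_rel M in HR.
have G := cnm_rel_of_CNM HR C L; have VM := cnm_rel_code P G.
have E : code_rel N (first_in N R) (first_in N (rel_tr R)) =2
         code_rel N (first_crossing tg) (first_crossing sg).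
  apply: eq_code_rel; last exact: code_b_first_crossing P VM Cs Ct Nf.
  exact: code_b_first_crossing (bij_pairC P) (cnm_codeC VM) Ct Cs (fixpoint_freeC P Nf).
apply: represents_inj (zero_one_rel_mx _) _ (represents_code_mx _ _) _; first by case: C.
by apply: (represents_eq_rel HR) => i j; rewrite (cnm_rel_code_relE P G).
Qed.

Lemma unique_CNM_iff : 1 < N ->
  (exists! M, is_CNM M /\ leaf_mx M = perm_mx s) <->
  [/\ sole_crossings N sg, sole_crossings N tg & fixpoint_free N sg].
Proof.
move=> n1; split; last by case; exact: unique_CNM_of_sole_crossings.
case/unique_code_of_unique_CNM => a [b [V U]].
have [Cs Ct] := sole_crossings_of_unique_code P n1 V U.
by split => //; exact: fixpoint_free_of_unique_code P n1 V U.
Qed.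

Lemma Lsubset_conditions_iff : 1 < N ->
  ((forall k, 2 <= k -> k <= N.-1 ->
      #|[set p in Lsubset N k | (perm_mx s : 'M[int]_N) p.1 p.2 == 1%R]| = 1) /\
   (forall i : 'I_N, (perm_mx s : 'M[int]_N) i i != 1%R)) <->
  [/\ sole_crossings N sg, sole_crossings N tg & fixpoint_free N sg].
Proof.
move=> n1; split.
  case=> HL /perm_mx_diag_fixpoint_free Nf.
  have H k : 0 < k -> k.+1 < N -> single_hook N sg k.
    by move=> k0 kN; apply/Lsubset_single_hook; apply: HL; lia.
  split => //; first exact: sole_crossings_of_single_hooks Nf n1 H.
  apply: (sole_crossings_of_single_hooks (fixpoint_freeC P Nf) n1) => k k0 kN.
  exact: single_hookC P (H k k0 kN).
case=> Cs _ Nf; split; last exact/perm_mx_diag_fixpoint_free.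
move=> k k2 kN; have -> : k = k.-1.+1 by lia.
by apply/Lsubset_single_hook; apply: (single_hook_of_sole_crossings Nf P Cs (k := k.-1)); lia.
Qed.

End LeafPermutation.

Local Open Scope ring_scope.

Theorem theorem3p4 (n : nat) (P : 'M[int]_n) :
  (2 <= n)%N -> is_perm_mx P ->
  ((exists! M : 'M[int]_n, is_CNM M /\ leaf_mx M = P) <->
   ((forall k : nat, (2 <= k)%N -> (k <= n.-1)%N ->
       #|[set p in Lsubset n k | P p.1 p.2 == 1]| = 1%N)
    /\ (forall i : 'I_n, P i i != 1))).
Proof.
case: n P => [|n] P // n2 /is_perm_mxP [s ->].
exact: iff_trans (unique_CNM_iff s n2) (iff_sym (Lsubset_conditions_iff s n2)).
Qed.
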